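(* Let $\mathsf{k}$ be a field, $R=\mathsf{k}[x,y]$, $S=R[t]$, $A=\mathsf{k}[t]/(t^3)$, $F_B=X-Y$, $G_1=Y^{[2]}-X^{[2]}$, $G_2=X^{[2]}Y-XY^{[2]}$ and $F=T^{[2]}F_B+TG_1+G_2\in Q_S$. Then $\operatorname{Ann}_R(G_1)\subseteq\operatorname{Ann}_R(F_B)$, so the ideals $I_i$ (defined below) satisfy $I_1=I_2=R$ and the condition $I_1\circ G_1\subseteq R\circ F_B$ fails; nevertheless $C=S/\operatorname{Ann}_S(F)$ is a free extension with base $A$ and fiber $B=R/\operatorname{Ann}_R(F_B)=R/(x+y,xy)$ (via $\iota,\pi$).
   Context: $Q_R=\mathsf{k}_{DP}[X,Y]$, $Q_S=\mathsf{k}_{DP}[X,Y,T]$ divided power rings with contraction action ($x^s\circ X^{[k]}=X^{[k-s]}$ for $k\ge s$, else $0$, similarly for $y,t$). $I_0=\operatorname{Ann}_R(F_B)$, $I_i=(I_{i-1}:\operatorname{Ann}_R(G_i))$ with $(I:J)=\{f:fJ\subseteq I\}$. $\iota:A\to C$ is induced by $\mathsf{k}[t]\subset S$, $\pi:C\to B$ by $t\mapsto 0$. $C$ is a free extension with base $A$ and fiber $B$ if $\iota$ makes $C$ a free $A$-module and $\pi$ is surjective with $\ker\pi=(\iota(A_+))C$. *)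

From HB Require Import structures.
From mathcomp Require Import all_boot all_order all_algebra.
Set Implicit Arguments. Unset Strict Implicit. Unset Printing Implicit Defensive.
Import GRing.Theory.
Local Open Scope ring_scope.

(* Polynomial rings in several variables are represented by iterated
   univariate polynomials:
     R   := k[x,y]   = {poly {poly k}}          (outer var x, inner var y)
     S   := R[t]     = {poly {poly {poly k}}}   (outer var t)
   Coefficient f`_i`_j of f : R is the coefficient of x^i y^j;
   coefficient f`_a`_i`_j of f : S is the coefficient of t^a x^i y^j.

   Divided power rings Q_R, Q_S are represented by the same types, as
   coefficient containers: G`_i`_j is the coefficient of X^[i] Y^[j]
   (and F`_a`_i`_j that of T^[a] X^[i] Y^[j]).  Only the k-module structure
   and the contraction action are used on Q_R, Q_S. *)

Notation Rpoly k := {poly {poly k}}.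
Notation Spoly k := {poly {poly {poly k}}}.

(* Lifting a contraction c : U -> V -> V to one more variable:
   (f o G)`_n = sum_i c f`_i G`_(n+i), i.e. x^s o X^[m] = X^[m-s] (0 if m<s). *)
Definition contrP (U V : nzRingType) (c : U -> V -> V)
  (f : {poly U}) (G : {poly V}) : {poly V} :=
  \poly_(n < size G) \sum_(i < size f) c f`_i G`_(n + i).

Definition contr1 (k : fieldType) : {poly k} -> {poly k} -> {poly k} :=
  contrP (fun a b : k => a * b).
Definition contrR (k : fieldType) : Rpoly k -> Rpoly k -> Rpoly k :=
  contrP (@contr1 k).
Definition contrS (k : fieldType) : Spoly k -> Spoly k -> Spoly k :=
  contrP (@contrR k).

Definition AnnR (k : fieldType) (G : Rpoly k) : Rpoly k -> Prop :=
  fun f => contrR f G = 0.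
Definition AnnS (k : fieldType) (F : Spoly k) : Spoly k -> Prop :=
  fun f => contrS f F = 0.

Definition colon (T : nzRingType) (I J : T -> Prop) : T -> Prop :=
  fun f => forall g, J g -> I (f * g).

Definition xR (k : fieldType) : Rpoly k := 'X.
Definition yR (k : fieldType) : Rpoly k := ('X : {poly k})%:P.
Definition tS (k : fieldType) : Spoly k := 'X.

(* Elements of Q_R (monomial X^[i]Y^[j] is written xR^i * yR^j as a
   coefficient placeholder) *)
Definition FB (k : fieldType) : Rpoly k := xR k - yR k.
Definition G1 (k : fieldType) : Rpoly k := yR k ^+ 2 - xR k ^+ 2.
Definition G2 (k : fieldType) : Rpoly k :=
  xR k ^+ 2 * yR k - xR k * yR k ^+ 2.
Definition FS (k : fieldType) : Spoly k :=
  tS k ^+ 2 * (FB k)%:P + tS k * (G1 k)%:P + (G2 k)%:P.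

Definition I0 (k : fieldType) := AnnR (FB k).
Definition I1 (k : fieldType) := colon (@I0 k) (AnnR (G1 k)).
Definition I2 (k : fieldType) := colon (@I1 k) (AnnR (G2 k)).

Definition embT (k : fieldType) (a : {poly k}) : Spoly k :=
  map_poly (fun c : k => c%:P%:P) a.

(* C = S/J is a free extension with base A = k[t]/(t^n) and fiber B = R/I
   via iota : A -> C (induced by k[t] ⊂ S) and pi : C -> B (t |-> 0).
   Stated on representatives in S and R:
   - iota is well defined: t^n ∈ J;
   - C is a free A-module: there is an A-basis (b_i)_{i<m} of C, i.e. every
     element of C is an A-combination of the b_i, and an A-combination is 0
     in C only if all coefficients are 0 in A (i.e. divisible by t^n);
   - pi is well defined (J|_{t=0} ⊆ I) and surjective;
   - ker pi = (iota(A_+)) C, with A_+ = (t), i.e. the preimage of ker pi in S,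
     {f | f(t=0) ∈ I}, equals J + tS. *)
Definition free_extension (k : fieldType) (n : nat)
  (J : Spoly k -> Prop) (I : Rpoly k -> Prop) : Prop :=
  [/\ J (tS k ^+ n),
      exists (m : nat) (b : 'I_m -> Spoly k),
        (forall f : Spoly k, exists a : 'I_m -> {poly k},
            J (f - \sum_(i < m) embT (a i) * b i)) /\
        (forall a : 'I_m -> {poly k},
            J (\sum_(i < m) embT (a i) * b i) ->
            forall i, ('X ^+ n %| a i)%R),
      (forall f : Spoly k, J f -> I f`_0),
      (forall g : Rpoly k, exists f : Spoly k, I (f`_0 - g))
    & (forall f : Spoly k,
          I f`_0 <-> exists g h : Spoly k, J g /\ f = g + tS k * h)].

(* Contraction by x^i y^j shifts the divided-power coefficient table of a form
   by (i, j), so the annihilator of a form of bounded degree is cut out by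
   finitely many linear equations on the low-degree coefficients of f.  For F_B
   they say that f has no constant term and equal coefficients of x and y,
   i.e. Ann(F_B) = (x + y, xy); Ann(G_1) lies in (x, y)^2, inside Ann(F_B), so
   I_1 = I_2 = R, while 1 o G_1 = G_1 has a Y^[2] term that no h o F_B has.
   For F there are six equations; solving them writes every f modulo Ann_S(F)
   as a(t) + b(t) x with a, b unique modulo t^3, so 1, x is a basis of C over
   k[t]/(t^3), and at t = 0 they reduce to the two equations of Ann(F_B). *)

From HB Require Import structures.
From mathcomp Require Import all_boot all_order all_algebra.
From mathcomp Require Import ring.
Set Implicit Arguments. Unset Strict Implicit.
Import GRing.Theory.
Local Open Scope ring_scope.

Section Contraction.
Variables (U V : nzRingType) (c : U -> V -> V).
Hypotheses (c0f : forall v, c 0 v = 0) (cf0 : forall u, c u 0 = 0).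

Lemma coef_contrP_le N (f : {poly U}) (G : {poly V}) n : (size G <= N)%N ->
  (contrP c f G)`_n = \sum_(i < N) c f`_i G`_(n + i).
Proof.
move=> /leq_sizeP GN; rewrite coef_poly.
have split_at m M (F : nat -> V) : (m <= M)%N -> (forall i, (m <= i)%N -> F i = 0) ->
    \sum_(i < m) F i = \sum_(i < M) F i.
  move=> mM F0; rewrite -!(big_mkord xpredT F) (big_cat_nat (leq0n m) mM) /=.
  by rewrite [X in _ + X]big1_seq ?addr0 // => i /andP[_]; rewrite mem_index_iota => /andP[/F0].
case: ltnP => [_|Gn].
  set F := fun i => c f`_i G`_(n + i).
  rewrite (split_at _ (size f + N) F) ?leq_addr //; last first.
    by move=> i fi; rewrite /F nth_default ?c0f.
  rewrite -(split_at N _ F) ?leq_addl // => i Ni.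
  by rewrite /F GN ?cf0 // (leq_trans Ni) ?leq_addl.
by rewrite big1 // => i _; rewrite [G`_ _]nth_default ?cf0 // (leq_trans Gn) ?leq_addr.
Qed.

Lemma contrP0l (G : {poly V}) : contrP c 0 G = 0.
Proof. by apply/polyP=> n; rewrite coef_poly size_poly0 big_ord0 coef0 if_same. Qed.

Lemma contrP0r (f : {poly U}) : contrP c f 0 = 0.
Proof. by apply/polyP=> n; rewrite coef_poly size_poly0 coef0. Qed.

Lemma contrP1 (G : {poly V}) : (forall v, c 1 v = v) -> contrP c 1 G = G.
Proof.
move=> c1v; apply/polyP=> n; rewrite coef_poly size_poly1 big_ord1 coefC /= addn0 c1v.
by case: ltnP => // Gn; rewrite nth_default.
Qed.

End Contraction.

Section NestedContraction.
Variable k : fieldType.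

Definition bounded2 N (G : Rpoly k) :=
  forall i j, (N <= i)%N || (N <= j)%N -> G`_i`_j = 0.
Definition bounded3 N (F : Spoly k) :=
  forall a i j, [|| (N <= a)%N, (N <= i)%N | (N <= j)%N] -> F`_a`_i`_j = 0.

Lemma size_bounded2 N (G : Rpoly k) : bounded2 N G -> (size G <= N)%N.
Proof.
by move=> hG; apply/leq_sizeP=> i Ni; apply/polyP=> j; rewrite coef0 hG ?Ni.
Qed.

Lemma bounded3_coef N (F : Spoly k) a : bounded3 N F -> bounded2 N F`_a.
Proof. by move=> hF i j hij; rewrite hF ?hij ?orbT. Qed.

Lemma size_bounded3 N (F : Spoly k) : bounded3 N F -> (size F <= N)%N.
Proof.
move=> hF; apply/leq_sizeP=> a Na; apply/polyP=> i; apply/polyP=> j.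
by rewrite !coef0 hF ?Na.
Qed.

Lemma coef_contr1 N (p q : {poly k}) l : (size q <= N)%N ->
  (contr1 p q)`_l = \sum_(r < N) p`_r * q`_(l + r).
Proof. by apply: coef_contrP_le => x; rewrite (mul0r, mulr0). Qed.

Lemma contr1_1 (q : {poly k}) : contr1 1 q = q.
Proof. by apply: contrP1 => a; rewrite mul1r. Qed.

Lemma contrR_1 (G : Rpoly k) : contrR 1 G = G.
Proof. exact: contrP1 contr1_1. Qed.

Lemma coef_contrR N (f G : Rpoly k) m l : bounded2 N G ->
  (contrR f G)`_m`_l = \sum_(j < N) \sum_(r < N) f`_j`_r * G`_(m + j)`_(l + r).
Proof.
move=> hG; rewrite (coef_contrP_le _ _ _ _ (size_bounded2 hG)) ?coef_sum.
- apply: eq_bigr => j _; apply: coef_contr1; apply/leq_sizeP=> r Nr.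
  by rewrite hG ?Nr ?orbT.
- exact: contrP0l.
- exact: contrP0r.
Qed.

Lemma coef_contrS N (f F : Spoly k) a m l : bounded3 N F ->
  (contrS f F)`_a`_m`_l = \sum_(i < N) \sum_(j < N) \sum_(r < N)
     f`_i`_j`_r * F`_(a + i)`_(m + j)`_(l + r).
Proof.
move=> hF; rewrite (coef_contrP_le _ _ _ _ (size_bounded3 hF)) ?coef_sum.
- by apply: eq_bigr => i _; rewrite (coef_contrR _ _ _ (bounded3_coef _ hF)).
- exact: contrP0l.
- exact: contrP0r.
Qed.

Lemma coef_contrR_out N (f G : Rpoly k) m l : bounded2 N G ->
  (N <= m)%N || (N <= l)%N -> (contrR f G)`_m`_l = 0.
Proof.
move=> hG Nml; rewrite (coef_contrR _ _ _ hG) big1 // => j _; rewrite big1 // => r _.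
rewrite hG ?mulr0 //.
by case/orP: Nml => h; apply/orP; [left|right]; exact: leq_trans h (leq_addr _ _).
Qed.

Lemma contrR_eq0 N (f G : Rpoly k) : bounded2 N G ->
  (forall m l, (m < N)%N -> (l < N)%N -> (contrR f G)`_m`_l = 0) ->
  contrR f G = 0.
Proof.
move=> hG h0; apply/polyP=> m; apply/polyP=> l; rewrite !coef0.
have [mN|Nm] := ltnP m N; last by rewrite (coef_contrR_out _ hG) ?Nm.
have [lN|Nl] := ltnP l N; last by rewrite (coef_contrR_out _ hG) ?Nl ?orbT.
exact: h0.
Qed.

Lemma coef_contrS_out N (f F : Spoly k) a m l : bounded3 N F ->
  [|| (N <= a)%N, (N <= m)%N | (N <= l)%N] -> (contrS f F)`_a`_m`_l = 0.
Proof.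
move=> hF Naml; rewrite (coef_contrS _ _ _ _ hF) big1 // => i _; rewrite big1 // => j _.
rewrite big1 // => r _; rewrite hF ?mulr0 //.
by case/or3P: Naml => h; apply/or3P; [apply: Or31|apply: Or32|apply: Or33];
  exact: leq_trans h (leq_addr _ _).
Qed.

Lemma contrS_eq0 N (f F : Spoly k) : bounded3 N F ->
  (forall a m l, (a < N)%N -> (m < N)%N -> (l < N)%N -> (contrS f F)`_a`_m`_l = 0) ->
  contrS f F = 0.
Proof.
move=> hF h0; apply/polyP=> a; apply/polyP=> m; apply/polyP=> l; rewrite !coef0.
have [aN|Na] := ltnP a N; last by rewrite (coef_contrS_out _ hF) ?Na.
have [mN|Nm] := ltnP m N; last by rewrite (coef_contrS_out _ hF) ?Nm ?orbT.
have [lN|Nl] := ltnP l N; last by rewrite (coef_contrS_out _ hF) ?Nl ?orbT.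
exact: h0.
Qed.
End NestedContraction.

Section Coefficients.
Variable k : fieldType.

Definition FB_tab (i j : nat) : k :=
  match i, j with 1%N, 0%N => 1 | 0%N, 1%N => -1 | _, _ => 0 end.
Definition G1_tab (i j : nat) : k :=
  match i, j with 0%N, 2%N => 1 | 2%N, 0%N => -1 | _, _ => 0 end.
Definition G2_tab (i j : nat) : k :=
  match i, j with 2%N, 1%N => 1 | 1%N, 2%N => -1 | _, _ => 0 end.
Definition FS_tab (a i j : nat) : k :=
  match a with 0%N => G2_tab i j | 1%N => G1_tab i j | 2%N => FB_tab i j | _ => 0 end.

Lemma coef_xRyR i j a b :
  (xR k ^+ i * yR k ^+ j)`_a`_b = ((a == i) && (b == j))%:R.
Proof.
rewrite /xR /yR -rmorphXn /= mulrC coefCM coefXn.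
by case: (a == i); rewrite ?mulr1 ?mulr0 ?coef0 // coefXn.
Qed.

Lemma FB_coef a b : (FB k)`_a`_b = FB_tab a b.
Proof.
have := coef_xRyR 1 0 a b; have := coef_xRyR 0 1 a b.
rewrite !expr1 !expr0 mulr1 mul1r /FB !coefB => -> ->.
by case: a => [|[|a]]; case: b => [|[|b]]; rewrite /= ?subr0 ?sub0r ?subrr.
Qed.

Lemma G1_coef a b : (G1 k)`_a`_b = G1_tab a b.
Proof.
have := coef_xRyR 0 2 a b; have := coef_xRyR 2 0 a b.
rewrite !expr0 mulr1 mul1r /G1 !coefB => -> ->.
by case: a => [|[|[|a]]]; case: b => [|[|[|b]]]; rewrite /= ?subr0 ?sub0r ?subrr.
Qed.

Lemma G2_coef a b : (G2 k)`_a`_b = G2_tab a b.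
Proof.
have := coef_xRyR 2 1 a b; have := coef_xRyR 1 2 a b.
rewrite !expr1 /G2 !coefB => -> ->.
by case: a => [|[|[|a]]]; case: b => [|[|[|b]]]; rewrite /= ?subr0 ?sub0r ?subrr.
Qed.

Lemma FS_coef a b c : (FS k)`_a`_b`_c = FS_tab a b c.
Proof.
have -> : (FS k)`_a = if a == 0%N then G2 k else if a == 1%N then G1 k
                      else if a == 2%N then FB k else 0.
  rewrite /FS /tS !coefD coefXnM coefXM !coefC.
  by case: a => [|[|[|a]]] /=; rewrite ?add0r ?addr0.
by case: a => [|[|[|a]]]; rewrite /= ?coef0 ?G2_coef ?G1_coef ?FB_coef.
Qed.

Lemma bounded2_FB : bounded2 2 (FB k).
Proof. by move=> [|[|a]] [|[|b]] //= _; rewrite FB_coef. Qed.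

Lemma bounded2_G1 : bounded2 3 (G1 k).
Proof. by move=> [|[|[|a]]] [|[|[|b]]] //= _; rewrite G1_coef. Qed.

Lemma bounded3_FS : bounded3 3 (FS k).
Proof.
by move=> [|[|[|a]]] [|[|[|b]]] [|[|[|c]]] //= _; rewrite FS_coef.
Qed.
End Coefficients.

Section Annihilators.
Variable k : fieldType.

Lemma coef_contrR_FB (f : Rpoly k) m l : (contrR f (FB k))`_m`_l =
  \sum_(j < 2) \sum_(r < 2) f`_j`_r * FB_tab k (m + j) (l + r).
Proof.
rewrite (coef_contrR _ _ _ (bounded2_FB k)).
by apply: eq_bigr => j _; apply: eq_bigr => r _; rewrite FB_coef.
Qed.

Lemma coef_contrR_G1 (f : Rpoly k) m l : (contrR f (G1 k))`_m`_l =
  \sum_(j < 3) \sum_(r < 3) f`_j`_r * G1_tab k (m + j) (l + r).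
Proof.
rewrite (coef_contrR _ _ _ (bounded2_G1 k)).
by apply: eq_bigr => j _; apply: eq_bigr => r _; rewrite G1_coef.
Qed.

Lemma coef_contrS_FS (f : Spoly k) a m l : (contrS f (FS k))`_a`_m`_l =
  \sum_(i < 3) \sum_(j < 3) \sum_(r < 3) f`_i`_j`_r * FS_tab k (a + i) (m + j) (l + r).
Proof.
rewrite (coef_contrS _ _ _ _ (bounded3_FS k)); apply: eq_bigr => i _.
by apply: eq_bigr => j _; apply: eq_bigr => r _; rewrite FS_coef.
Qed.

Ltac expand_coef := rewrite !big_ord_recr !big_ord0 /=.

(* Closes [x = y] from [C : e = 0] when [e] is [x - y] or [y - x] up to ring. *)
Ltac from_zero C := apply: subr0_eq;
  first [rewrite -[RHS]C; ring | rewrite -[RHS]oppr0 -[in RHS]C; ring].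

Lemma AnnR_FBP (f : Rpoly k) : AnnR (FB k) f <-> f`_0`_0 = 0 /\ f`_1`_0 = f`_0`_1.
Proof.
split => [Ann | [f00 f10]].
  have := congr1 (fun p : Rpoly k => p`_1`_0) Ann.
  have := congr1 (fun p : Rpoly k => p`_0`_0) Ann.
  rewrite !coef_contrR_FB !coef0; expand_coef => E00 E10.
  by split; [from_zero E10 | from_zero E00].
rewrite /AnnR; apply: (contrR_eq0 (bounded2_FB k)) => -[|[|//]] [|[|//]] _ _;
  rewrite coef_contrR_FB; expand_coef; rewrite ?f00 ?f10; ring.
Qed.

Definition in_sqmax (f : Rpoly k) := [/\ f`_0`_0 = 0, f`_0`_1 = 0 & f`_1`_0 = 0].

Lemma AnnR_G1_sqmax (f : Rpoly k) : AnnR (G1 k) f -> in_sqmax f.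
Proof.
move=> Ann; have coef_eq0 m l : (contrR f (G1 k))`_m`_l = 0 by rewrite Ann !coef0.
move: (coef_eq0 0%N 2%N) (coef_eq0 0%N 1%N) (coef_eq0 1%N 0%N).
rewrite !coef_contrR_G1; expand_coef => E02 E01 E10.
by split; [from_zero E02 | from_zero E01 | from_zero E10].
Qed.

Lemma in_sqmax_mull (f g : Rpoly k) : in_sqmax g -> in_sqmax (f * g).
Proof.
case=> g00 g01 g10; split; first by rewrite !coef0M g00 mulr0.
  by rewrite coef0M coefM big_ord_recr big_ord1 /= g00 g01 !mulr0 addr0.
by rewrite coefM big_ord_recr big_ord1 coefD !coef0M /= g00 g10 !mulr0 addr0.
Qed.

Lemma in_sqmax_AnnR_FB (f : Rpoly k) : in_sqmax f -> AnnR (FB k) f.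
Proof. by case=> f00 f01 f10; apply/AnnR_FBP; rewrite f00 f01 f10. Qed.

Definition AnnS_FS_eqs (f : Spoly k) : Prop :=
  [/\ f`_0`_0`_0 = 0 /\ f`_0`_1`_0 = f`_0`_0`_1,
      f`_1`_0`_0 = f`_0`_0`_1,
      f`_1`_0`_1 = f`_0`_0`_2 - f`_0`_2`_0 + f`_1`_1`_0,
      f`_2`_0`_0 = f`_0`_2`_0 - f`_0`_1`_1 + f`_1`_0`_1
    & f`_2`_0`_1 = f`_0`_2`_1 - f`_0`_1`_2 + f`_1`_0`_2 - f`_1`_2`_0 + f`_2`_1`_0].

Lemma AnnS_FSP (f : Spoly k) : AnnS (FS k) f <-> AnnS_FS_eqs f.
Proof.
split => [Ann | [[E1 E2] E3 E4 E5 E6]].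
  have coef_eq0 a m l : \sum_(i < 3) \sum_(j < 3) \sum_(r < 3)
      f`_i`_j`_r * FS_tab k (a + i) (m + j) (l + r) = 0.
    by rewrite -coef_contrS_FS Ann !coef0.
  have := coef_eq0 0%N 0%N 0%N; expand_coef => C000.
  have := coef_eq0 0%N 0%N 1%N; expand_coef => C001.
  have := coef_eq0 1%N 0%N 0%N; expand_coef => C100.
  have := coef_eq0 1%N 0%N 1%N; expand_coef => C101.
  have := coef_eq0 2%N 0%N 0%N; expand_coef => C200.
  have := coef_eq0 2%N 1%N 0%N; expand_coef => C210.
  by split; first split; [from_zero C210 | from_zero C200 | from_zero C101
    | from_zero C100 | from_zero C001 | from_zero C000].
rewrite /AnnS; apply: (contrS_eq0 (bounded3_FS k)) => a m l.
rewrite coef_contrS_FS; expand_coef.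
by case: a => [|[|[|//]]] _; case: m => [|[|[|//]]] _; case: l => [|[|[|//]]] _ /=;
  rewrite ?E6 ?E5 ?E4 ?E3 ?E2 ?E1; ring.
Qed.
End Annihilators.

Lemma take_poly1 (R : nzSemiRingType) (p : {poly R}) : take_poly 1 p = (p`_0)%:P.
Proof. by apply/polyP=> -[|i]; rewrite coef_take_poly coefC. Qed.

Lemma take_poly2 (R : nzSemiRingType) (p : {poly R}) :
  take_poly 2 p = (p`_0)%:P + (p`_1)%:P * 'X.
Proof.
apply/polyP=> i; rewrite coef_take_poly coefD coefC coefMX coefC.
by case: i => [|[|i]] /=; rewrite ?addr0 ?add0r.
Qed.

Section FiberIdeals.
Variable k : fieldType.

Lemma AnnR_G1_sub_AnnR_FB (f : Rpoly k) : AnnR (G1 k) f -> AnnR (FB k) f.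
Proof. by move/AnnR_G1_sqmax/in_sqmax_AnnR_FB. Qed.

Lemma I1_full (f : Rpoly k) : I1 f.
Proof. by move=> g /AnnR_G1_sqmax sqmax_g; apply/in_sqmax_AnnR_FB/in_sqmax_mull. Qed.

Lemma I2_full (f : Rpoly k) : I2 f.
Proof. by move=> g _; apply: I1_full. Qed.

Lemma contr_G1_notin_contr_FB :
  ~ (forall f : Rpoly k, I1 f -> exists h : Rpoly k, contrR f (G1 k) = contrR h (FB k)).
Proof.
move=> contained; have [h /(congr1 (fun p : Rpoly k => p`_0`_2))] := contained 1 (I1_full 1).
rewrite contrR_1 G1_coef (coef_contrR_out _ (bounded2_FB k)) //=.
by move/eqP; rewrite oner_eq0.
Qed.

Lemma AnnR_FB_idealE (f : Rpoly k) : AnnR (FB k) f <->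
  exists a b : Rpoly k, f = a * (xR k + yR k) + b * (xR k * yR k).
Proof.
split; last first.
  case=> a [b ->]; apply/AnnR_FBP; rewrite /xR /yR mulrDr mulrA.
  by rewrite !coefD !coefMC !coefMX /= ?coefD ?coefMX ?coefMC ?coef0 /= ?mulr0 ?add0r ?addr0.
case/AnnR_FBP=> f00 f10.
set c := f`_0`_1; set u := drop_poly 2 f`_0; set v := drop_poly 1 f`_1.
set g := drop_poly 2 f.
have fE : f = (f`_0)%:P + (f`_1)%:P * 'X + g * 'X^2.
  by rewrite -take_poly2 poly_take_drop.
have f0E : f`_0 = c%:P * 'X + u * 'X^2.
  by rewrite -[LHS](poly_take_drop 2) take_poly2 f00 add0r.
have f1E : f`_1 = c%:P + v * 'X.
  by rewrite -[LHS](poly_take_drop 1) take_poly1 f10 expr1.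
(* f = c (x + y) + u y^2 + v xy + g x^2, and y^2 = y (x + y) - xy, x^2 = x (x + y) - xy. *)
exists (c%:P%:P + yR k * u%:P + xR k * g), (v%:P - u%:P - g).
rewrite {1}fE f0E f1E /xR /yR ?rmorphD ?rmorphM ?rmorphXn /=.
ring.
Qed.
End FiberIdeals.

Lemma dvdp_Xn (R : idomainType) n (p : {poly R}) :
  (forall i, (i < n)%N -> p`_i = 0) -> ('X^n %| p)%R.
Proof.
move=> low0; rewrite -(poly_take_drop n p).
have -> : take_poly n p = 0.
  by apply/polyP=> i; rewrite coef_take_poly coef0; case: ifP => // /low0.
by rewrite add0r dvdp_mull.
Qed.

Section FreeExtension.
Variable k : fieldType.

Lemma AnnS_FS_tS3 : AnnS (FS k) (tS k ^+ 3).
Proof.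
have t3 a i j : (a < 3)%N -> (tS k ^+ 3)`_a`_i`_j = 0.
  by move=> a3; rewrite coefXn ltn_eqF // !coef0.
by apply/AnnS_FSP; rewrite /AnnS_FS_eqs !t3 // !subr0 !addr0.
Qed.

Lemma coef_embT_basis (u v : {poly k}) a i j :
  (embT u + embT v * (xR k)%:P)`_a`_i`_j =
  if j == 0%N then (if i == 0%N then u`_a else if i == 1%N then v`_a else 0) else 0.
Proof.
rewrite coefD coefMC /embT !coef_map_id0 // /xR.
by case: i => [|[|i]]; case: j => [|j]; rewrite !coefE /= ?mulr0 ?mul1r ?mulr1 ?add0r ?addr0 ?coef0.
Qed.

(* Coordinates of f in the basis 1, x of C over A, obtained by solving the
   equations of [AnnS_FS_eqs] for the coefficients of t^a and t^a x. *)
Definition FS_coord0 (f : Spoly k) : {poly k} :=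
  Poly [:: f`_0`_0`_0; f`_1`_0`_0 - f`_0`_0`_1;
           f`_2`_0`_0 - f`_0`_2`_0 + f`_0`_1`_1 - f`_1`_0`_1].
Definition FS_coord1 (f : Spoly k) : {poly k} :=
  Poly [:: f`_0`_1`_0 - f`_0`_0`_1;
           f`_0`_0`_2 - f`_0`_2`_0 + f`_1`_1`_0 - f`_1`_0`_1;
           f`_0`_2`_1 - f`_0`_1`_2 + f`_1`_0`_2 - f`_1`_2`_0 + f`_2`_1`_0 - f`_2`_0`_1].

Lemma AnnS_FS_coord (f : Spoly k) :
  AnnS (FS k) (f - (embT (FS_coord0 f) + embT (FS_coord1 f) * (xR k)%:P)).
Proof.
apply/AnnS_FSP; rewrite /AnnS_FS_eqs !coefB !coef_embT_basis !coef_Poly /=.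
by split; first split; ring.
Qed.

Lemma AnnS_FS_basis_free (u v : {poly k}) :
  AnnS (FS k) (embT u + embT v * (xR k)%:P) -> ('X^3 %| u)%R /\ ('X^3 %| v)%R.
Proof.
move/AnnS_FSP; rewrite /AnnS_FS_eqs !coef_embT_basis /= => -[[u0 v0] u1 v1 u2 v2].
rewrite ?subr0 ?add0r ?addr0 in v0 u1 v1 u2 v2.
by split; apply: dvdp_Xn => -[|[|[|//]]].
Qed.

Lemma embT_Poly0 (s : seq k) : embT (Poly (0 :: s)) = tS k * embT (Poly s).
Proof.
apply/polyP=> i; rewrite /tS coefXM /embT !coef_map_id0 ?polyC0 // !coef_Poly.
by case: i => [|i] //=; rewrite ?polyC0 // coef_map_id0 ?polyC0 // coef_Poly.
Qed.

Lemma AnnS_FS_AnnR_FB (f : Spoly k) : AnnS (FS k) f -> AnnR (FB k) f`_0.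
Proof. by case/AnnS_FSP=> -[f000 f010] *; apply/AnnR_FBP. Qed.

Lemma AnnR_FB_coef0P (f : Spoly k) : AnnR (FB k) f`_0 <->
  exists g h : Spoly k, AnnS (FS k) g /\ f = g + tS k * h.
Proof.
split; last first.
  by case=> g [h [Ann_g ->]]; rewrite coefD /tS coefXM addr0; apply: AnnS_FS_AnnR_FB.
case/AnnR_FBP=> f000 f010; have := AnnS_FS_coord f.
rewrite /FS_coord0 /FS_coord1 f000 f010 subrr !embT_Poly0.
set A := embT _; set B := embT _ => Ann.
exists (f - (tS k * A + tS k * B * (xR k)%:P)), (A + B * (xR k)%:P).
by split=> //; ring.
Qed.

Lemma free_extension_FS : free_extension 3 (AnnS (FS k)) (AnnR (FB k)).
Proof.
have sum_basis (a : 'I_2 -> {poly k}) : \sum_(i < 2) embT (a i) * (xR k)%:P ^+ i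
    = embT (a ord0) + embT (a ord_max) * (xR k)%:P.
  rewrite big_ord_recr big_ord1 /= expr0 mulr1 expr1.
  by congr (embT (a _) + _); apply: val_inj.
split.
- exact: AnnS_FS_tS3.
- exists 2%N, (fun i : 'I_2 => (xR k)%:P ^+ i); split.
    move=> f; exists (fun i : 'I_2 => if i == ord0 then FS_coord0 f else FS_coord1 f).
    by rewrite sum_basis /=; apply: AnnS_FS_coord.
  move=> a; rewrite sum_basis => /AnnS_FS_basis_free [dvd0 dvd1] i.
  have [->|->] : i = ord0 \/ i = ord_max.
    by case: i => -[|[|//]] ?; [left | right]; apply: val_inj.
  + exact: dvd0.
  + exact: dvd1.
- exact: AnnS_FS_AnnR_FB.
- by move=> g; exists g%:P; rewrite coefC subrr; apply/AnnR_FBP; rewrite !coef0.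
- exact: AnnR_FB_coef0P.
Qed.
End FreeExtension.

Theorem mainTheorem6 (k : fieldType) :
  (forall f : Rpoly k, AnnR (G1 k) f -> AnnR (FB k) f) /\
  (forall f : Rpoly k, I1 f /\ I2 f) /\
  ~ (forall f : Rpoly k, I1 f -> exists h : Rpoly k,
        contrR f (G1 k) = contrR h (FB k)) /\
  (forall f : Rpoly k, AnnR (FB k) f <->
     exists a b : Rpoly k, f = a * (xR k + yR k) + b * (xR k * yR k)) /\
  free_extension 3 (AnnS (FS k)) (AnnR (FB k)).
Proof.
split; first exact: AnnR_G1_sub_AnnR_FB.
split; first by move=> f; split; [exact: I1_full | exact: I2_full].
split; first exact: contr_G1_notin_contr_FB.
split; first exact: AnnR_FB_idealE.
exact: free_extension_FS.
Qed.
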